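(* Let $r>1$ be a real number and let $p=T^3+rT^2+T+r$ over $\mathbb T$. Then a polynomial $q'$ over $\mathbb T$ satisfies $p\in(T+r)\boxdot q'$ if and only if $q'=T^2+sT+1$ for some $s\in[0,r^{-1}]$. In particular $T^2+T+1$ (whose coefficients are the elementary symmetric expressions $\max\{a_1,a_2\}$, $a_1a_2$ in the other roots $a_1=a_2=1$) is not such a quotient.
   Context: The tropical hyperfield $\mathbb T$ is $\mathbb R_{\ge0}$ with usual multiplication and hyperaddition $a\boxplus b=\{\max\{a,b\}\}$ if $a\ne b$, $a\boxplus a=[0,a]$ (so $c\in a\boxplus b$ iff the maximum of $a,b,c$ is attained at least twice). Polynomials over $\mathbb T$ are finitely supported sequences $\sum c_iT^i$; the hyperproduct is $p\boxdot q=\{\sum e_iT^i : e_i\in \boxplus_{k+l=i} c_kd_l\}$, with iterated sums $\boxplus_{i=1}^n a_i=\bigcup_{b\in\boxplus_{i=1}^{n-1}a_i} b\boxplus a_n$. *)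

(* the tropical hyperfield T = R_{>=0} with Stdlib reals. *)
From Stdlib Require Import Reals List.
Open Scope R_scope.

Definition hplus_mem (a b c : R) : Prop :=
  (a <> b /\ c = Rmax a b) \/ (a = b /\ 0 <= c <= a).

Fixpoint hsum_mem (f : nat -> R) (n : nat) (c : R) : Prop :=
  match n with
  | O => c = 0
  | S m => exists b, hsum_mem f m b /\ hplus_mem b (f m) c
  end.

(* Polynomials over T: finitely supported sequences of nonnegative reals;
   coefficient i is the coefficient of T^i. *)
Definition tpoly := nat -> R.

Definition is_tpoly (p : tpoly) : Prop :=
  (forall i, 0 <= p i) /\ exists N, forall i, (N <= i)%nat -> p i = 0.

(* Polynomial from its coefficient list, constant term first. *)
Definition mkpoly (l : list R) : tpoly := fun i => nth i l 0.

Definition hprod_mem (p q e : tpoly) : Prop :=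
  forall i, hsum_mem (fun k => p k * q (i - k)%nat) (S i) (e i).

From Stdlib Require Import Reals List Lra Lia FunctionalExtensionality.
Import ListNotations.
Open Scope R_scope.

(* Multiplying by a linear polynomial  a + bT  over the tropical
   hyperfield involves only two-term hypersums: trailing zero summands can be
   dropped from an iterated hypersum, so  e ∈ (a + bT) ⊡ q  says exactly
   e_0 = a q_0  and  e_{i+1} ∈ a q_{i+1} ⊞ b q_i  for all i (hprod_linear).
   For  p = r + T + rT^2 + T^3  and  a = r, b = 1  these conditions are read
   off coefficient by coefficient: q_0 = 1, then  1 ∈ r q_1 ⊞ 1  gives
   r q_1 <= 1, then  r ∈ r q_2 ⊞ q_1  with q_1 < r forces q_2 = 1, and the
   vanishing coefficients of p from degree 4 on give  q_i = r q_{i+1}  for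
   i >= 3, which for a finitely supported q forces q_i = 0 (tail_vanishes).
   Conversely each coefficient condition holds for  q = 1 + sT + T^2  with
   0 <= s <= 1/r.  The first part of the theorem is the combination of the
   two directions; the second follows since s = 1 > 1/r. *)

Lemma hplus_mem_comm a b c : hplus_mem a b c -> hplus_mem b a c.
Proof.
  intros [[Hn ->]|[-> H]].
  - left; split; [congruence| apply Rmax_comm].
  - right; lra.
Qed.

Lemma hplus_mem_absorb a b : 0 <= a <= b -> hplus_mem a b b.
Proof.
  intros Hab. destruct (Req_dec a b) as [E|E].
  - right; lra.
  - left; split; [exact E| symmetry; apply Rmax_right; lra].
Qed.

Lemma hplus_zero_l a c : 0 <= a -> (hplus_mem 0 a c <-> c = a).
Proof.
  intros Ha; split.
  - intros [[_ ->]|[<- H]]; [apply Rmax_right|]; lra.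
  - intros ->. apply hplus_mem_absorb; lra.
Qed.

Lemma hplus_zero_r b c : 0 <= b -> (hplus_mem b 0 c <-> c = b).
Proof.
  intros Hb; split.
  - intros H. apply hplus_mem_comm, hplus_zero_l in H; assumption.
  - intros ->. apply hplus_mem_comm, hplus_zero_l; auto.
Qed.

Lemma hplus_absorbed_le a b : hplus_mem a b b -> a <= b.
Proof.
  intros [[_ Hb]|[-> _]]; [rewrite Hb; apply Rmax_l | lra].
Qed.

Lemma hplus_gt_r a b c : hplus_mem a b c -> b < c -> a = c.
Proof.
  intros [[_ ->]|[-> H]] Hbc; [|lra].
  unfold Rmax in *. destruct (Rle_dec a b); lra.
Qed.

Lemma hplus_zero_sum a b : 0 <= a -> 0 <= b -> hplus_mem a b 0 -> a = b.
Proof.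
  intros Ha Hb [[Hn H]|[H _]]; [|exact H].
  exfalso. pose proof (Rmax_l a b); pose proof (Rmax_r a b).
  apply Hn; lra.
Qed.

Section IteratedSum.

Variable f : nat -> R.
Hypothesis f_nonneg : forall k, 0 <= f k.

Lemma hsum_nonneg n c : hsum_mem f n c -> 0 <= c.
Proof.
  revert c; induction n as [|n IH]; simpl; intros c H.
  - lra.
  - destruct H as [b [Hb [[_ ->]|[_ H]]]].
    + pose proof (IH b Hb). pose proof (Rmax_l b (f n)). lra.
    + lra.
Qed.

Lemma hsum_trailing_zeros m j c :
  (forall k, (m <= k)%nat -> f k = 0) ->
  (hsum_mem f (m + j) c <-> hsum_mem f m c).
Proof.
  intros Hz; revert c; induction j as [|j IH]; intros c.
  - rewrite Nat.add_0_r; tauto.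
  - rewrite Nat.add_succ_r; simpl. rewrite (Hz (m + j)%nat) by lia.
    split.
    + intros [b [Hb Hp]]. apply hplus_zero_r in Hp; [|exact (hsum_nonneg _ _ Hb)].
      subst; apply IH; exact Hb.
    + intros H. exists c. split; [apply IH; exact H|].
      apply hplus_zero_r; [exact (hsum_nonneg _ _ H)| reflexivity].
Qed.

Lemma hsum_one c : hsum_mem f 1 c <-> c = f 0%nat.
Proof.
  simpl; split.
  - intros [b [-> H]]. apply hplus_zero_l in H; auto.
  - intros ->. exists 0. split; [reflexivity|]. apply hplus_zero_l; auto.
Qed.

Lemma hsum_two c : hsum_mem f 2 c <-> hplus_mem (f 0%nat) (f 1%nat) c.
Proof.
  change (hsum_mem f 2 c) with (exists b, hsum_mem f 1 b /\ hplus_mem b (f 1%nat) c).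
  split.
  - intros [b [Hb H]]. apply hsum_one in Hb. subst; exact H.
  - intros H. exists (f 0%nat). split; [apply hsum_one; reflexivity| exact H].
Qed.

End IteratedSum.

Lemma mkpoly_overflow l i : (length l <= i)%nat -> mkpoly l i = 0.
Proof. intros H. unfold mkpoly. apply nth_overflow; exact H. Qed.

Lemma mkpoly_is_tpoly l : Forall (fun x => 0 <= x) l -> is_tpoly (mkpoly l).
Proof.
  intros Hl. split.
  - intros i. unfold mkpoly. destruct (Nat.lt_ge_cases i (length l)) as [Hi|Hi].
    + apply (proj1 (Forall_forall _ l) Hl), nth_In; exact Hi.
    + rewrite nth_overflow by exact Hi; lra.
  - exists (length l). apply mkpoly_overflow.
Qed.

Lemma mkpoly3_ext (q : tpoly) :
  (forall i, (3 <= i)%nat -> q i = 0) ->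
  q = mkpoly [q 0%nat; q 1%nat; q 2%nat].
Proof.
  intros Hz. apply functional_extensionality. intros [|[|[|i]]]; try reflexivity.
  rewrite mkpoly_overflow by (simpl; lia). apply Hz; lia.
Qed.

Lemma hprod_linear a b q e : 0 <= a -> 0 <= b -> (forall i, 0 <= q i) ->
  (hprod_mem (mkpoly [a; b]) q e <->
   e 0%nat = a * q 0%nat /\
   forall i, hplus_mem (a * q (S i)) (b * q i) (e (S i))).
Proof.
  intros Ha Hb Hq.
  assert (Hlin : forall k, 0 <= mkpoly [a; b] k).
  { apply mkpoly_is_tpoly. repeat apply Forall_cons; auto. }
  assert (Hf : forall i k, 0 <= mkpoly [a; b] k * q (i - k)%nat).
  { intros i k. apply Rmult_le_pos; auto. }
  assert (Hsucc : forall i c,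
    hsum_mem (fun k => mkpoly [a; b] k * q (S i - k)%nat) (S (S i)) c <->
    hplus_mem (a * q (S i)) (b * q i) c).
  { intros i c. replace (S (S i)) with (2 + i)%nat by lia.
    rewrite hsum_trailing_zeros, hsum_two by
      (auto; intros k Hk; rewrite mkpoly_overflow by (simpl; lia); ring).
    unfold mkpoly; simpl. rewrite Nat.sub_0_r; tauto. }
  split.
  - intros H. split.
    + pose proof (H 0%nat) as H0. apply hsum_one in H0; [|apply Hf].
      rewrite H0; reflexivity.
    + intros i. apply Hsucc, H.
  - intros [H0 H1] [|i].
    + apply hsum_one; [apply Hf|]. rewrite H0; reflexivity.
    + apply Hsucc, H1.
Qed.

Lemma tail_vanishes (q : tpoly) a m :
  (exists N, forall i, (N <= i)%nat -> q i = 0) ->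
  (forall i, (m <= i)%nat -> q i = a * q (S i)) ->
  forall i, (m <= i)%nat -> q i = 0.
Proof.
  intros [N HN] Hrec.
  assert (Hk : forall k i, (m <= i)%nat -> (N <= i + k)%nat -> q i = 0).
  { induction k as [|k IH]; intros i Hi HNi.
    - apply HN; lia.
    - rewrite (Hrec i Hi), (IH (S i)) by lia. ring. }
  intros i Hi. apply (Hk N i Hi); lia.
Qed.

Lemma le_inv_iff (r s : R) : 0 < r -> (s <= / r <-> r * s <= 1).
Proof.
  intros Hr. split; intros H.
  - apply Rmult_le_compat_l with (r := r) in H; [|lra].
    rewrite Rinv_r in H; lra.
  - apply Rmult_le_reg_l with r; [exact Hr|]. rewrite Rinv_r; lra.
Qed.

Section Quotient.

Variable r : R.
Hypothesis r_gt1 : 1 < r.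

Let p : tpoly := mkpoly [r; 1; r; 1].

Lemma p_coeff_high i : (3 <= i)%nat -> p (S i) = 0.
Proof. intros Hi. apply mkpoly_overflow; simpl; lia. Qed.

Lemma quotient_forward q : is_tpoly q -> hprod_mem (mkpoly [r; 1]) q p ->
  exists s, 0 <= s <= / r /\ q = mkpoly [1; s; 1].
Proof.
  intros [Hq Hfin] H. apply hprod_linear in H; [|lra|lra|exact Hq].
  destruct H as [H0 Hs]. unfold p, mkpoly in H0; simpl in H0.
  assert (Hq0 : q 0%nat = 1) by nra.
  assert (Hq1 : r * q 1%nat <= 1).
  { pose proof (Hs 0%nat) as H1. unfold p, mkpoly in H1; simpl in H1.
    rewrite Hq0, Rmult_1_r in H1. exact (hplus_absorbed_le _ _ H1). }
  assert (Hq2 : q 2%nat = 1).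
  { pose proof (Hs 1%nat) as H2. unfold p, mkpoly in H2; simpl in H2.
    rewrite Rmult_1_l in H2. pose proof (Hq 1%nat).
    apply hplus_gt_r in H2; nra. }
  assert (Htail : forall i, (3 <= i)%nat -> q i = 0).
  { apply (tail_vanishes q r 3 Hfin). intros i Hi.
    pose proof (Hs i) as Hi'. rewrite p_coeff_high, Rmult_1_l in Hi' by exact Hi.
    symmetry; apply hplus_zero_sum; auto. apply Rmult_le_pos; [lra| apply Hq]. }
  exists (q 1%nat). split.
  - split; [apply Hq| apply le_inv_iff; lra].
  - rewrite (mkpoly3_ext q Htail), Hq0, Hq2. reflexivity.
Qed.

Lemma quotient_backward s : 0 <= s <= / r ->
  hprod_mem (mkpoly [r; 1]) (mkpoly [1; s; 1]) p.
Proof.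
  intros [Hs0 Hs1]. apply le_inv_iff in Hs1; [|lra].
  assert (Hq : is_tpoly (mkpoly [1; s; 1])).
  { apply mkpoly_is_tpoly. repeat apply Forall_cons; auto; lra. }
  apply hprod_linear; [lra|lra|apply Hq|]. split.
  - unfold p, mkpoly; simpl; ring.
  - intros i. destruct (Nat.le_gt_cases 3 i) as [Hi|Hi].
    + rewrite p_coeff_high, !mkpoly_overflow by (simpl; lia).
      rewrite !Rmult_0_r. apply hplus_mem_absorb; lra.
    + unfold p, mkpoly.
      destruct i as [|[|[|i]]]; try lia; simpl; rewrite ?Rmult_1_l, ?Rmult_1_r.
      * apply hplus_mem_absorb; nra.
      * apply hplus_mem_comm, hplus_mem_absorb; nra.
      * rewrite Rmult_0_r. apply hplus_mem_absorb; lra.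
Qed.

End Quotient.

Theorem mainTheorem7 (r : R) (hr : 1 < r) :
  (forall q : tpoly, is_tpoly q ->
     (hprod_mem (mkpoly [r; 1]) q (mkpoly [r; 1; r; 1]) <->
      exists s, 0 <= s <= / r /\ q = mkpoly [1; s; 1]))
  /\ ~ hprod_mem (mkpoly [r; 1]) (mkpoly [1; 1; 1]) (mkpoly [r; 1; r; 1]).
Proof.
  split.
  - intros q Hq. split.
    + apply quotient_forward; assumption.
    + intros [s [Hs ->]]. apply quotient_backward; assumption.
  - intros H. apply quotient_forward in H;
      [| exact hr | apply mkpoly_is_tpoly; repeat apply Forall_cons; auto; lra].
    destruct H as [s [[_ Hs] E]].
    assert (Hs1 : 1 = s) by exact (f_equal (fun f => f 1%nat) E).
    subst s. apply le_inv_iff in Hs; lra.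
Qed.
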